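(* Let $G$ be a polycyclic-by-finite group and let $S=\bigoplus_{g\in G}S_g$ be an epsilon-strongly $G$-graded ring with principal component $R=S_e$. If $R$ is right (respectively left) noetherian, then $S$ is right (respectively left) noetherian.
   Context: All rings are associative with multiplicative identity $1\neq 0$. A ring $S$ is $G$-graded if $S=\bigoplus_{g\in G}S_g$ for additive subgroups $S_g$ with $S_gS_h\subseteq S_{gh}$ for all $g,h\in G$; $S_e$ is the principal component. $S$ is epsilon-strongly $G$-graded if (a) $S_gS_{g^{-1}}S_g=S_g$ for all $g\in G$, and (b) for each $g\in G$ the ideal $S_gS_{g^{-1}}$ of $S_e$ has a multiplicative identity. A group is polycyclic-by-finite if it has a subnormal series $1=G_0\lhd G_1\lhd\cdots\lhd G_n\lhd G_{n+1}=G$ with $G/G_n$ finite and each $G_{i+1}/G_i$ ($0\le i\le n-1$) cyclic. *)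

From mathcomp Require Import all_boot all_algebra.
Set Implicit Arguments. Unset Strict Implicit. Unset Printing Implicit Defensive.
Import GRing.Theory.
Local Open Scope ring_scope.

Record group := Group {
  gcar :> Type;
  gmul : gcar -> gcar -> gcar;
  ginv : gcar -> gcar;
  gone : gcar;
  gmulA : forall x y z, gmul x (gmul y z) = gmul (gmul x y) z;
  gmul1 : forall x, gmul gone x = x;
  gmulV : forall x, gmul (ginv x) x = gone
}.

Fixpoint gpow (G : group) (x : G) (n : nat) : G :=
  if n is n'.+1 then gmul x (gpow x n') else gone G.

Definition gzpow (G : group) (x : G) (k : int) : G :=
  match k with
  | Posz n => gpow x n
  | Negz n => ginv (gpow x n.+1)
  end.

Definition is_subgroup (G : group) (H : G -> Prop) : Prop :=
  H (gone G) /\ (forall x y, H x -> H y -> H (gmul x (ginv y))).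

(* G is polycyclic-by-finite: there is a subnormal series
   1 = H 0 <| H 1 <| ... <| H n <| H (n+1) = G with G / H n finite and
   each H (i+1) / H i (0 <= i <= n-1) cyclic. *)
Definition polycyclic_by_finite (G : group) : Prop :=
  exists (n : nat) (H : nat -> G -> Prop),
    (forall i, is_subgroup (H i)) /\
    (forall x, H 0%N x <-> x = gone G) /\
    (forall x, H n.+1 x) /\
    (forall i, (i <= n)%N ->
       (forall x, H i x -> H i.+1 x) /\
       (forall x y, H i x -> H i.+1 y -> H i (gmul (gmul y x) (ginv y)))) /\
    (forall i, (i < n)%N ->
       exists a, H i.+1 a /\
         forall y, H i.+1 y -> exists k : int, H i (gmul (ginv (gzpow a k)) y)) /\
    (exists (m : nat) (t : 'I_m -> G),
       forall y : G, exists j, H n (gmul (ginv (t j)) y)).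

Definition is_addsubgroup (S : nzRingType) (A : S -> Prop) : Prop :=
  A 0 /\ (forall x y, A x -> A y -> A (x - y)).

Definition G_graded (G : group) (S : nzRingType) (Sg : G -> S -> Prop) : Prop :=
  (forall g, is_addsubgroup (Sg g)) /\
  (forall s : S, exists (n : nat) (g : 'I_n -> G) (x : 'I_n -> S),
      (forall i, Sg (g i) (x i)) /\ s = \sum_(i < n) x i) /\
  (forall (n : nat) (g : 'I_n -> G) (x : 'I_n -> S),
      injective g -> (forall i, Sg (g i) (x i)) -> \sum_(i < n) x i = 0 ->
      forall i, x i = 0) /\
  (forall g h x y, Sg g x -> Sg h y -> Sg (gmul g h) (x * y)).

Definition prod3 (S : nzRingType) (A B C : S -> Prop) (s : S) : Prop :=
  exists (n : nat) (a b c : 'I_n -> S),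
    (forall i, A (a i) /\ B (b i) /\ C (c i)) /\ s = \sum_(i < n) (a i * b i * c i).

Definition prod2 (S : nzRingType) (A B : S -> Prop) (s : S) : Prop :=
  exists (n : nat) (a b : 'I_n -> S),
    (forall i, A (a i) /\ B (b i)) /\ s = \sum_(i < n) (a i * b i).

Definition epsilon_strongly_graded (G : group) (S : nzRingType)
    (Sg : G -> S -> Prop) : Prop :=
  G_graded Sg /\
  (forall g : G, forall s, prod3 (Sg g) (Sg (ginv g)) (Sg g) s <-> Sg g s) /\
  (forall g : G, exists e, prod2 (Sg g) (Sg (ginv g)) e /\
     forall y, prod2 (Sg g) (Sg (ginv g)) y -> e * y = y /\ y * e = y).

(* right / left ideals of the subring P of S (P = S_e or P = all of S) *)
Definition right_ideal_of (S : nzRingType) (P I : S -> Prop) : Prop :=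
  (forall x, I x -> P x) /\ I 0 /\ (forall x y, I x -> I y -> I (x - y)) /\
  (forall x r, I x -> P r -> I (x * r)).

Definition left_ideal_of (S : nzRingType) (P I : S -> Prop) : Prop :=
  (forall x, I x -> P x) /\ I 0 /\ (forall x y, I x -> I y -> I (x - y)) /\
  (forall x r, I x -> P r -> I (r * x)).

Definition right_noetherian_on (S : nzRingType) (P : S -> Prop) : Prop :=
  forall I : nat -> S -> Prop,
    (forall k, right_ideal_of P (I k)) ->
    (forall k x, I k x -> I k.+1 x) ->
    exists N, forall k, (N <= k)%N -> forall x, I k x <-> I N x.

Definition left_noetherian_on (S : nzRingType) (P : S -> Prop) : Prop :=
  forall I : nat -> S -> Prop,
    (forall k, left_ideal_of P (I k)) ->
    (forall k x, I k x -> I k.+1 x) ->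
    exists N, forall k, (N <= k)%N -> forall x, I k x <-> I N x.

(* Write S_H for the additive span of the components S_h, h in H, and induct
   along the subnormal series, starting from S_1 = S_e.  Two facts are needed,
   and neither uses that the sum of the components is direct.
   - Finite index: if G = t_1 K u ... u t_m K then S is a finitely generated
     right S_K-module.  For each coset, noetherianity of S_e lets finitely many
     products a_i b_i (a_i in S_g, b_i in S_{g^-1}, g in t_j K) generate the right
     ideal of S_e spanned by all such products, and every s in S_g is a sum of
     products a b c, hence of a_i (b_i r c) with b_i r c in S_K.
   - Cyclic extension: if H/K is generated by aK, S_H is graded by Z with
     U_m = S_{a^m K} and U_0 = S_K, and each U_n has a right local unit in
     U_{-n} U_n.  A Hilbert basis argument on leading terms then transfers
     noetherianity from U_0 to S_H; the local units let the leading terms in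
     degree n be recovered from those in degree 0.
   The local units come from the epsilon_g, which are commuting idempotents of
   S_e: finitely many generate all those of a given set of degrees, and their
   join is a common unit.  The left-noetherian case is the right one for the
   opposite ring graded by g |-> S_{g^-1}. *)

From mathcomp Require Import all_boot all_order all_algebra zify.
From Stdlib Require Import Classical ClassicalEpsilon.
Set Implicit Arguments. Unset Strict Implicit. Unset Printing Implicit Defensive.
Import Order.TTheory GRing.Theory.
Local Open Scope ring_scope.

Inductive zspan (S : nzRingType) (P : S -> Prop) : S -> Prop :=
| zspan0 : zspan P 0
| zspan_gen x : P x -> zspan P x
| zspanB x y : zspan P x -> zspan P y -> zspan P (x - y).

Definition is_subring (S : nzRingType) (A : S -> Prop) : Prop :=
  is_addsubgroup A /\ forall x y, A x -> A y -> A (x * y).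

Section AdditiveSubgroups.
Variable S : nzRingType.
Implicit Types (A P Q : S -> Prop) (x y r : S).

Lemma addsubgroupD A x y : is_addsubgroup A -> A x -> A y -> A (x + y).
Proof.
move=> [A0 AB] Ax Ay; have -> : x + y = x - (0 - y) by rewrite sub0r opprK.
by apply: (AB) => //; apply: AB.
Qed.

Lemma addsubgroup_sum A n (x : 'I_n -> S) :
  is_addsubgroup A -> (forall i, A (x i)) -> A (\sum_(i < n) x i).
Proof.
move=> hA; elim: n x => [|n IH] x hx; first by rewrite big_ord0; case: hA.
by rewrite big_ord_recl; apply: addsubgroupD => //; apply: IH.
Qed.

Lemma addsubgroup_mulr A r : is_addsubgroup A -> is_addsubgroup (fun x => A (x * r)).
Proof. by case=> A0 AB; split=> [|x y]; rewrite ?mul0r ?mulrBl //; apply: AB. Qed.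

Lemma addsubgroup_mull A r : is_addsubgroup A -> is_addsubgroup (fun x => A (r * x)).
Proof. by case=> A0 AB; split=> [|x y]; rewrite ?mulr0 ?mulrBr //; apply: AB. Qed.

Lemma addsubgroup_fixr r : is_addsubgroup (fun x => x * r = x).
Proof. by split=> [|x y hx hy]; rewrite ?mul0r // mulrBl hx hy. Qed.

Lemma addsubgroup_fixl r : is_addsubgroup (fun x => r * x = x).
Proof. by split=> [|x y hx hy]; rewrite ?mulr0 // mulrBr hx hy. Qed.

Lemma zspan_addsubgroup P : is_addsubgroup (zspan P).
Proof. by split; [apply: zspan0 | apply: zspanB]. Qed.

Lemma zspan_min P A : is_addsubgroup A -> (forall y, P y -> A y) ->
  forall x, zspan P x -> A x.
Proof. by move=> [A0 AB] hPA x; elim=> [|y /hPA|y z _ hy _ hz] //; apply: AB. Qed.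

Lemma zspan_mono P Q x : (forall y, P y -> Q y) -> zspan P x -> zspan Q x.
Proof. by move=> hPQ; apply: (zspan_min (zspan_addsubgroup Q)) => y /hPQ /zspan_gen. Qed.

Lemma zspan_mul2 P Q A x y : is_addsubgroup A ->
  (forall a b, P a -> Q b -> A (a * b)) -> zspan P x -> zspan Q y -> A (x * y).
Proof.
move=> hA hPQ hx hy; apply: (zspan_min (addsubgroup_mulr y hA)) hx => a Pa.
by apply: (zspan_min (addsubgroup_mull a hA)) hy => b Qb; apply: hPQ.
Qed.

End AdditiveSubgroups.

Lemma zspan_converse (S : nzRingType) (P : S -> Prop) x :
  zspan P x -> zspan (S := S^c) P x.
Proof.
by elim=> [|y Py|y z _ hy _ hz]; [apply: zspan0 | apply: zspan_gen | apply: zspanB].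
Qed.

Section IdempotentJoin.
Variable S : nzRingType.

(* [1 - idem_join es] is the product of the [1 - e]; the recursive form keeps
   [idem_join es] inside any subring containing [es]. *)
Fixpoint idem_join (es : seq S) : S :=
  if es is e :: es' then idem_join es' + e - idem_join es' * e else 0.

Lemma idem_join_subring (W : S -> Prop) es :
  is_subring W -> (forall e, e \in es -> W e) -> W (idem_join es).
Proof.
move=> [hW WM]; elim: es => [|e es IH] hes /=; first exact: hW.1.
have Wj : W (idem_join es) by apply: IH => x hx; apply: hes; rewrite inE hx orbT.
have We : W e by apply: hes; rewrite mem_head.
by apply: hW.2; [apply: addsubgroupD | apply: WM].
Qed.

Lemma idem_join_absorb es :
  (forall e, e \in es -> e * e = e) ->
  (forall e e', e \in es -> e' \in es -> e * e' = e' * e) ->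
  forall e, e \in es -> idem_join es * e = e.
Proof.
elim: es => [|e es IH] // idem comm e'; rewrite inE => /orP[/eqP ->|he'] /=.
  by rewrite mulrBl mulrDl -mulrA idem ?mem_head // addrAC subrr add0r.
have je' : idem_join es * e' = e'.
  apply: IH he' => [x hx|x x' hx hx']; first by apply: idem; rewrite inE hx orbT.
  by apply: comm; rewrite inE ?hx ?hx' orbT.
rewrite mulrBl mulrDl je' -mulrA (comm e e') ?mem_head ?inE ?he' ?orbT //.
by rewrite mulrA je' addrK.
Qed.

End IdempotentJoin.

Section GroupFacts.
Variable G : group.
Implicit Types x y : G.

Lemma gmulV_r x : gmul x (ginv x) = gone G.
Proof.
have idem : gmul (gmul x (ginv x)) (gmul x (ginv x)) = gmul x (ginv x).
  by rewrite -gmulA (gmulA (ginv x)) gmulV gmul1.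
by rewrite -[LHS]gmul1 -(gmulV (gmul x (ginv x))) -gmulA idem.
Qed.

Lemma gmul1_r x : gmul x (gone G) = x.
Proof. by rewrite -(gmulV x) gmulA gmulV_r gmul1. Qed.

Lemma gmulKV x y : gmul x (gmul (ginv x) y) = y.
Proof. by rewrite gmulA gmulV_r gmul1. Qed.

Lemma ginv_unique x y : gmul y x = gone G -> y = ginv x.
Proof. by move=> h; rewrite -[y]gmul1_r -(gmulV_r x) gmulA h gmul1. Qed.

Lemma ginvK x : ginv (ginv x) = x.
Proof. by apply/esym/ginv_unique; rewrite gmulV_r. Qed.

Lemma ginv1 : ginv (gone G) = gone G.
Proof. by rewrite -[LHS]gmul1_r gmulV. Qed.

Lemma ginvM x y : ginv (gmul x y) = gmul (ginv y) (ginv x).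
Proof.
by apply/esym/ginv_unique; rewrite -gmulA (gmulA (ginv x)) gmulV gmul1 gmulV.
Qed.

Lemma gpowSr x n : gpow x n.+1 = gmul (gpow x n) x.
Proof.
elim: n => [|n IH]; first by rewrite /= gmul1 gmul1_r.
by change (gmul x (gpow x n.+1) = gmul (gmul x (gpow x n)) x); rewrite IH gmulA.
Qed.

Lemma gzpowS1 x (m : int) : gzpow x (m + 1) = gmul (gzpow x m) x.
Proof.
case: m => [n|[|n]].
- have -> : Posz n + 1 = Posz n.+1 by lia.
  by rewrite /= -gpowSr.
- have -> : Negz 0 + 1 = Posz 0 by lia.
  by rewrite /= gmul1_r gmulV.
- have -> : Negz n.+1 + 1 = Negz n by lia.
  by rewrite /= [in RHS](ginvM x) -gmulA gmulV gmul1_r.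
Qed.

Lemma gzpowB1 x (m : int) : gzpow x (m - 1) = gmul (gzpow x m) (ginv x).
Proof. by rewrite -[in RHS](subrK 1 m) gzpowS1 -gmulA gmulV_r gmul1_r. Qed.

Lemma gzpowD x (m k : int) : gzpow x (m + k) = gmul (gzpow x m) (gzpow x k).
Proof.
case: k => n; elim: n m => [|n IH] m.
- by rewrite addr0 /= gmul1_r.
- have -> : m + Posz n.+1 = (m + Posz n) + 1 by lia.
  by rewrite gzpowS1 IH -gmulA -gzpowS1; congr (gmul _ (gzpow _ _)); lia.
- have -> : m + Negz 0 = m - 1 by lia.
  by rewrite gzpowB1 /= gmul1_r.
- have -> : m + Negz n.+1 = (m + Negz n) - 1 by lia.
  by rewrite gzpowB1 IH -gmulA -gzpowB1; congr (gmul _ (gzpow _ _)); lia.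
Qed.

Lemma gzpowN x (m : int) : gzpow x (- m) = ginv (gzpow x m).
Proof. by apply: ginv_unique; rewrite -gzpowD addNr. Qed.

Section Subgroup.
Variable H : G -> Prop.
Hypothesis sH : is_subgroup H.

Lemma subgroup1 : H (gone G).
Proof. by case: sH. Qed.

Lemma subgroupV x : H x -> H (ginv x).
Proof. by case: sH => H1 HB hx; rewrite -[ginv x]gmul1; apply: HB. Qed.

Lemma subgroupM x y : H x -> H y -> H (gmul x y).
Proof.
by case: sH => H1 HB hx hy; rewrite -[y]ginvK; apply: HB => //; apply: subgroupV.
Qed.

Lemma subgroup_zpow x k : H x -> H (gzpow x k).
Proof.
have Hpow n : H x -> H (gpow x n).
  by move=> hx; elim: n => [|n IH] /=; [apply: subgroup1 | apply: subgroupM].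
by move=> hx; case: k => n; [exact: Hpow | apply/subgroupV/Hpow].
Qed.

Lemma subgroup_coset_div t x y :
  H (gmul (ginv t) x) -> H (gmul (ginv t) y) -> H (gmul (ginv x) y).
Proof.
move=> hx hy; have := subgroupM (subgroupV hx) hy.
by rewrite ginvM ginvK -!gmulA gmulKV.
Qed.

End Subgroup.

Section CyclicQuotient.
Variables (K H : G -> Prop) (a : G).
Hypotheses (sK : is_subgroup K) (sH : is_subgroup H) (KH : forall x, K x -> H x)
  (nK : forall x y, K x -> H y -> K (gmul (gmul y x) (ginv y))) (Ha : H a).

Definition zcoset (m : int) (g : G) : Prop := K (gmul (ginv (gzpow a m)) g).

Lemma zcoset0 g : zcoset 0 g <-> K g.
Proof. by rewrite /zcoset /= ginv1 gmul1. Qed.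

Lemma zcoset_sub m g : zcoset m g -> H g.
Proof.
move=> /KH hg; have := subgroupM sH (subgroup_zpow sH m Ha) hg.
by rewrite gmulKV.
Qed.

Lemma zcosetM m k g h : zcoset m g -> zcoset k h -> zcoset (m + k) (gmul g h).
Proof.
move=> hg hh; rewrite /zcoset gzpowD ginvM.
have hk : H (ginv (gzpow a k)) := subgroupV sH (subgroup_zpow sH k Ha).
have := subgroupM sK (nK hg hk) hh.
by rewrite ginvK -!gmulA gmulKV.
Qed.

Lemma zcosetV m g : zcoset m g -> zcoset (- m) (ginv g).
Proof.
move=> hg; rewrite /zcoset gzpowN ginvK.
have := nK (subgroupV sK hg) (subgroup_zpow sH m Ha).
by rewrite ginvM ginvK -!gmulA gmulV_r gmul1_r.
Qed.

End CyclicQuotient.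

End GroupFacts.

Section Noetherian.
Variable S : nzRingType.
Implicit Types (P T M X : S -> Prop) (I : nat -> S -> Prop).

Definition ascending I := forall k x, I k x -> I k.+1 x.

Definition stationary_at I N := forall k, (N <= k)%N -> forall x, I k x <-> I N x.

Definition right_submodule T M (I : S -> Prop) :=
  (forall x, I x -> M x) /\ I 0 /\ (forall x y, I x -> I y -> I (x - y)) /\
  (forall x r, I x -> T r -> I (x * r)).

Definition right_noetherian_module T M :=
  forall I, (forall k, right_submodule T M (I k)) -> ascending I ->
  exists N, stationary_at I N.

Lemma ascending_le I k k' x : ascending I -> (k <= k')%N -> I k x -> I k' x.
Proof.
move=> hI /subnKC <-; elim: (k' - k)%N => [|d IH]; first by rewrite addn0.
by move=> hx; rewrite addnS; apply/hI/IH.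
Qed.

Lemma stationary_at_le I N N' :
  stationary_at I N -> (N <= N')%N -> stationary_at I N'.
Proof. by move=> hN hNN' k hk x; rewrite hN ?(leq_trans hNN' hk) // hN. Qed.

Lemma right_submodule_addsubgroup T M (I : S -> Prop) :
  right_submodule T M I -> is_addsubgroup I.
Proof. by case=> _ [I0 [IB _]]. Qed.

Lemma right_noetherian_on_ext P Q :
  (forall x, P x <-> Q x) -> right_noetherian_on P -> right_noetherian_on Q.
Proof.
move=> hPQ hP I hI; apply: hP => k; have [IQ [I0 [IB IM]]] := hI k.
split; first by move=> x /IQ /hPQ.
by do 2?split=> //; move=> x r hx /hPQ; apply: IM.
Qed.

Definition right_ideal_gen P X :=
  zspan (fun y => X y \/ exists x r, X x /\ P r /\ y = x * r).

Lemma right_ideal_gen_ideal P X : is_subring P -> (forall x, X x -> P x) ->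
  right_ideal_of P (right_ideal_gen P X).
Proof.
move=> [[P0 PB] PM] hXP; split.
  apply: (zspan_min (A := P)) => // y [/hXP //|[x [r [/hXP Px [Pr ->]]]]].
  exact: PM.
split; first exact: zspan0.
split; first exact: zspanB.
move=> x r hx Pr; apply: (zspan_min (addsubgroup_mulr r (zspan_addsubgroup _))) hx.
move=> y [Xy|[x' [r' [Xx' [Pr' ->]]]]]; apply: zspan_gen; right.
  by exists y, r.
by exists x', (r' * r); rewrite mulrA; do 2!split=> //; apply: PM.
Qed.

Lemma right_ideal_gen_mono P X X' x : (forall y, X y -> X' y) ->
  right_ideal_gen P X x -> right_ideal_gen P X' x.
Proof.
move=> hX; apply: zspan_mono => y [/hX|[x' [r [/hX ? ?]]]]; first by left.
by right; exists x', r.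
Qed.

Lemma right_ideal_gen_fixl P X f x : (forall y, X y -> f * y = y) ->
  right_ideal_gen P X x -> f * x = x.
Proof.
move=> hX; apply: (zspan_min (addsubgroup_fixl f)) => _ [/hX //|[y [r [/hX hy [_ ->]]]]].
by rewrite mulrA hy.
Qed.

Lemma right_noetherian_fg P (A : eqType) (X : A -> Prop) (phi : A -> S) :
  is_subring P -> right_noetherian_on P -> (forall z, X z -> P (phi z)) ->
  exists xs : seq A, (forall z, z \in xs -> X z) /\
    forall z, X z -> right_ideal_gen P (fun y => exists2 p, p \in xs & y = phi p) (phi z).
Proof.
move=> hP hRN hXP; apply: NNPP => hfail.
pose gen (xs : seq A) := right_ideal_gen P (fun y => exists2 p, p \in xs & y = phi p).
have [a0 _] : exists a, X a.
  apply: NNPP => hX; apply: hfail; exists [::]; split=> // z Xz.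
  by case: hX; exists z.
have hnext (xs : seq A) : exists z, (forall p, p \in xs -> X p) -> X z /\ ~ gen xs (phi z).
  case: (classic (forall p, p \in xs -> X p)) => hxs; last by exists a0.
  apply: NNPP => hz; apply: hfail; exists xs; split=> // z Xz.
  by apply: NNPP => hzg; apply: hz; exists z.
have [next hnext'] := choice _ hnext.
pose chain k := iter k (fun xs => next xs :: xs) [::].
have chainX k p : p \in chain k -> X p.
  elim: k p => [|k IH] p //=; rewrite inE => /orP[/eqP ->|/IH //].
  exact: (hnext' _ IH).1.
have hideal k : right_ideal_of P (gen (chain k)).
  by apply: right_ideal_gen_ideal => // _ [p /chainX Xp ->]; apply: hXP.
have hasc : ascending (fun k => gen (chain k)).
  move=> k x; apply: right_ideal_gen_mono => _ [p hp ->].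
  by exists p => //=; rewrite inE hp orbT.
have [N hN] := hRN _ hideal hasc.
have [_] := hnext' _ (chainX N); apply; apply/(hN N.+1 (leqnSn N)).
by apply: zspan_gen; left; exists (next (chain N)); rewrite ?mem_head.
Qed.

Lemma right_noetherian_grid P (A : nat -> nat -> S -> Prop) :
  right_noetherian_on P -> (forall l k, right_ideal_of P (A l k)) ->
  (forall l l' k k' x, (l <= l')%N -> (k <= k')%N -> A l k x -> A l' k' x) ->
  exists N, forall l k, (N <= k)%N -> forall x, A l k x -> A l N x.
Proof.
move=> hRN hA Amono.
have [p hp] := hRN (fun k => A k k) (fun k => hA k k)
  (fun k x => Amono _ _ _ _ x (leqnSn k) (leqnSn k)).
have [N0 hN0] : exists N0, forall l, (l < p)%N ->
    forall k, (N0 <= k)%N -> forall x, A l k x -> A l N0 x.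
  elim: (p) => [|q [N' hN']]; first by exists 0%N.
  have [Nq hNq] : exists Nq, stationary_at (A q) Nq.
    by apply: hRN => // k x; apply: Amono.
  exists (maxn N' Nq) => l; rewrite ltnS leq_eqVlt => /orP[/eqP -> | hlq] k hk x hx.
    by apply/(stationary_at_le hNq (leq_maxr N' Nq) hk).
  apply: (Amono l l N' _ x (leqnn l) (leq_maxl N' Nq)).
  by apply: (hN' l hlq k) hx; apply: leq_trans (leq_maxl _ _) hk.
exists (maxn p N0) => l k hk x hx; case: (ltnP l p) => hlp.
  apply: (Amono l l N0 _ x (leqnn l) (leq_maxr p N0)).
  by apply: (hN0 l hlp k) hx; apply: leq_trans (leq_maxr _ _) hk.
have hd := Amono _ _ _ _ x (leq_maxl l k) (leq_maxr l k) hx.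
have := (hp _ (leq_trans hlp (leq_maxl l k)) x).1 hd.
exact: (Amono p l p _ x hlp (leq_maxl p N0)).
Qed.

Definition right_span T (xs : seq S) :=
  zspan (fun y => exists a t, a \in xs /\ T t /\ y = a * t).

Section RightSpan.
Variable T : S -> Prop.
Hypotheses (hT : is_subring T) (RNT : right_noetherian_on T).

Lemma right_span_mulr xs x r : T r -> right_span T xs x -> right_span T xs (x * r).
Proof.
move=> Tr; apply: (zspan_min (addsubgroup_mulr r (zspan_addsubgroup _))).
move=> _ [a [t [ha [Tt ->]]]]; apply: zspan_gen; exists a, (t * r).
by rewrite mulrA; do 2!split=> //; apply: hT.2.
Qed.

Lemma right_span_nil x : right_span T [::] x -> x = 0.
Proof.
apply: (zspan_min (A := eq^~ 0)) => [|_ [a [t []]]] //.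
by split=> // y z -> ->; rewrite subr0.
Qed.

Lemma right_span_cons b xs x : right_span T (b :: xs) x ->
  exists t m, T t /\ right_span T xs m /\ x = b * t + m.
Proof.
apply: (zspan_min (A := fun x => exists t m, T t /\ right_span T xs m /\ x = b * t + m)).
  split.
    by exists 0, 0; rewrite mulr0 addr0; split; [apply: hT.1.1 | split=> //; apply: zspan0].
  move=> _ _ [t1 [m1 [T1 [M1 ->]]]] [t2 [m2 [T2 [M2 ->]]]].
  exists (t1 - t2), (m1 - m2); rewrite mulrBr opprD addrACA.
  by split; [apply: hT.1.2 | split=> //; apply: zspanB].
move=> _ [a [t [ha [Tt ->]]]]; move: ha; rewrite inE => /orP[/eqP ->|ha].
  by exists t, 0; rewrite addr0; do 2!split=> //; apply: zspan0.
exists 0, (a * t); rewrite mulr0 add0r; split; first exact: hT.1.1.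
by split=> //; apply: zspan_gen; exists a, t.
Qed.

Section ConsStep.
Variables (b : S) (xs : seq S) (N : nat -> S -> Prop).
Hypothesis hN : forall k, right_submodule T (right_span T (b :: xs)) (N k).

Definition cons_lead k t := T t /\ exists2 m, right_span T xs m & N k (b * t + m).

Definition cons_tail k x := N k x /\ right_span T xs x.

Lemma cons_lead_ideal k : right_ideal_of T (cons_lead k).
Proof.
have [_ [N0 [NB NM]]] := hN k.
split; first by move=> x [].
split; first by split; [apply: hT.1.1 | exists 0; rewrite ?mulr0 ?addr0 //; apply: zspan0].
split=> [x y [Tx [m1 M1 N1]] [Ty [m2 M2 N2]]|x r [Tx [m M Nm]] Tr].
  split; first exact: hT.1.2.
  by exists (m1 - m2); [apply: zspanB | rewrite mulrBr addrACA -opprD; apply: NB].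
split; first exact: hT.2.
by exists (m * r); [apply: right_span_mulr | rewrite mulrA -mulrDl; apply: NM].
Qed.

Lemma cons_tail_submodule k : right_submodule T (right_span T xs) (cons_tail k).
Proof.
have [_ [N0 [NB NM]]] := hN k.
split; first by move=> x [].
split; first by split=> //; apply: zspan0.
split=> [x y [Nx Mx] [Ny My]|x r [Nx Mx] Tr].
  by split; [apply: NB | apply: zspanB].
by split; [apply: NM | apply: right_span_mulr].
Qed.

End ConsStep.

Theorem right_noetherian_right_span xs : right_noetherian_module T (right_span T xs).
Proof.
elim: xs => [|b xs IH] N hN hasc.
  have zero k x : N k x -> x = 0 by move=> /(hN k).1 /right_span_nil.
  exists 0%N => k _ x; split=> /zero ->; [case: (hN 0%N) | case: (hN k)] => _ [] //.
have [N1 hN1] : exists N1, stationary_at (cons_lead b xs N) N1.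
  apply: RNT => [k|k t [Tt [m Mm Nm]]]; first exact: cons_lead_ideal.
  by split=> //; exists m => //; apply: hasc.
have [N2 hN2] : exists N2, stationary_at (cons_tail xs N) N2.
  apply: IH => [k|k x [Nx Mx]]; first exact: cons_tail_submodule.
  by split=> //; apply: hasc.
pose K := maxn N1 N2.
exists K => k hk x; split=> [hx|]; last exact: ascending_le.
have [_ [NK0 [NKB _]]] := hN K.
have [t [m [Tt [Mm xE]]]] := right_span_cons ((hN k).1 x hx).
have [_ [m' Mm' Nm']] : cons_lead b xs N K t.
  apply/(stationary_at_le hN1 (leq_maxl N1 N2) hk).
  by split=> //; exists m => //; rewrite -xE.
have [Nd _] : cons_tail xs N K (m - m').
  apply/(stationary_at_le hN2 (leq_maxr N1 N2) hk); split; last exact: zspanB.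
  have [_ [_ [NkB _]]] := hN k.
  have -> : m - m' = x - (b * t + m') by rewrite xE opprD addrACA subrr add0r.
  exact: NkB hx (ascending_le hasc hk Nm').
have -> : x = (b * t + m') - (0 - (m - m')) by rewrite xE sub0r opprK -addrA subrKC.
by apply: NKB Nm' (NKB _ _ NK0 Nd).
Qed.

End RightSpan.

End Noetherian.

Section ZGraded.
Variables (S : nzRingType) (T Uall : S -> Prop) (U : int -> S -> Prop).
Hypotheses (U_addsubgroup : forall m, is_addsubgroup (U m))
  (UM : forall m k x y, U m x -> U k y -> U (m + k) (x * y))
  (U0 : forall x, U 0 x <-> T x)
  (U_Uall : forall m x, U m x -> Uall x)
  (Uall_span : forall x, Uall x -> zspan (fun y => exists m, U m y) x)
  (U_unit : forall n, exists f,
     zspan (fun y => exists b c, U (- n) b /\ U n c /\ y = b * c) f /\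
     forall s, U n s -> s * f = s)
  (RNT : right_noetherian_on T).

Fixpoint in_window (n : int) (l : nat) (x : S) : Prop :=
  if l is l'.+1 then exists t y, U n t /\ in_window (n - 1) l' y /\ x = t + y
  else x = 0.

Lemma in_window_addsubgroup n l : is_addsubgroup (in_window n l).
Proof.
elim: l n => [|l IH] n; first by split=> [|x y /= -> ->] //; rewrite subr0.
split=> [|x y].
  exists 0, 0; rewrite addr0.
  by split; [apply: (U_addsubgroup n).1 | split=> //; apply: (IH _).1].
move=> [t1 [y1 [h1 [r1 ->]]]] [t2 [y2 [h2 [r2 ->]]]].
exists (t1 - t2), (y1 - y2); rewrite opprD addrACA.
by split; [apply: (U_addsubgroup n).2 | split=> //; apply: (IH _).2].
Qed.

Lemma in_window_S n l x : in_window n l x -> in_window n l.+1 x.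
Proof.
elim: l n x => [|l IH] n x /=.
  by move=> ->; exists 0, 0; rewrite addr0; split=> //; apply: (U_addsubgroup n).1.
by move=> [t [y [ht [hy ->]]]]; exists t, y; split=> //; split=> //; apply: IH.
Qed.

Lemma in_window_widen n l l' x : (l <= l')%N -> in_window n l x -> in_window n l' x.
Proof. by apply: ascending_le => k y; apply: in_window_S. Qed.

Lemma in_window_shift n l (d : nat) x : in_window n l x -> in_window (n + d%:Z) (l + d) x.
Proof.
move=> hx; elim: d => [|d IH]; first by rewrite addr0 addn0.
have -> : n + d.+1%:Z = (n + d%:Z) + 1 by lia.
rewrite addnS /=; exists 0, x; rewrite add0r addrK.
by split=> //; apply: (U_addsubgroup _).1.
Qed.

Lemma in_window_common n l x n' l' x' : in_window n l x -> in_window n' l' x' ->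
  exists N L, in_window N L x /\ in_window N L x'.
Proof.
wlog le_nn' : n l x n' l' x' / n <= n'.
  move=> hw hx hx'; case/orP: (le_total n n') => h; first exact: hw h hx hx'.
  by have [N [L [h1 h2]]] := hw _ _ _ _ _ _ h hx' hx; exists N, L.
move=> hx hx'; have [d n'E] : exists d : nat, n' = n + d%:Z by exists `|n' - n|%N; lia.
exists n', (l + d + l')%N; split.
  by apply: (in_window_widen (leq_addr _ _)); rewrite n'E; apply: in_window_shift.
by apply: in_window_widen hx'; rewrite addnC leq_addr.
Qed.

Lemma in_window_mulr n l x k u : in_window n l x -> U k u -> in_window (n + k) l (x * u).
Proof.
elim: l n x => [|l IH] n x /=; first by move=> -> _; rewrite mul0r.
move=> [t [y [ht [hy ->]]]] hu; exists (t * u), (y * u); rewrite mulrDl.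
by split; [apply: UM | split=> //; rewrite addrAC; apply: IH].
Qed.

Lemma in_window_cover x : Uall x -> exists n l, in_window n l x.
Proof.
move=> /Uall_span.
apply: (zspan_min (A := fun x => exists n l, in_window n l x)) => [|y [m hm]].
  split; first by exists 0, 0%N.
  move=> y z [n [l hy]] [n' [l' hz]].
  have [N [L [h1 h2]]] := in_window_common hy hz.
  by exists N, L; apply: (in_window_addsubgroup N L).2.
by exists m, 1%N; exists y, 0; rewrite addr0.
Qed.

Definition leading (J : S -> Prop) (l : nat) (n : int) (t : S) :=
  U n t /\ exists x y, J x /\ in_window (n - 1) l y /\ x = t + y.

Section Leading.
Variable J : S -> Prop.
Hypothesis hJ : right_ideal_of Uall J.

Let J_addsubgroup : is_addsubgroup J := right_submodule_addsubgroup hJ.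

Lemma leading_addsubgroup l n : is_addsubgroup (leading J l n).
Proof.
split.
  split; first exact: (U_addsubgroup n).1.
  exists 0, 0; rewrite addr0; split; first exact: J_addsubgroup.1.
  by split=> //; apply: (in_window_addsubgroup _ _).1.
move=> t1 t2 [h1 [x1 [y1 [J1 [R1 e1]]]]] [h2 [x2 [y2 [J2 [R2 e2]]]]].
split; first exact: (U_addsubgroup n).2.
exists (x1 - x2), (y1 - y2); split; first exact: J_addsubgroup.2.
split; first exact: (in_window_addsubgroup _ _).2.
by rewrite e1 e2 opprD addrACA.
Qed.

Lemma leading_mulr l n k t u : leading J l n t -> U k u -> leading J l (n + k) (t * u).
Proof.
move=> [ht [x [y [Jx [Ry xE]]]]] hu; split; first exact: UM.
have [_ [_ [_ JM]]] := hJ.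
exists (x * u), (y * u); split; first exact: JM _ _ Jx (U_Uall hu).
by split; [rewrite addrAC; apply: in_window_mulr | rewrite xE mulrDl].
Qed.

Lemma leading0_ideal l : right_ideal_of T (leading J l 0).
Proof.
have [L0 LB] := leading_addsubgroup l 0.
split; first by move=> x [/U0].
split=> //; split=> // x r hx /U0 hr.
by have := leading_mulr hx hr; rewrite addr0.
Qed.

Lemma leading_span l n t : leading J l n t ->
  zspan (fun y => exists t0 u, leading J l 0 t0 /\ U n u /\ y = t0 * u) t.
Proof.
move=> hL; have [f [hf hsf]] := U_unit n.
rewrite -(hsf t hL.1).
apply: (zspan_min (addsubgroup_mull t (zspan_addsubgroup _))) hf.
move=> _ [b [c [hb [hc ->]]]]; apply: zspan_gen; exists (t * b), c; rewrite mulrA.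
by split=> //; have := leading_mulr hL hb; rewrite addrN.
Qed.

End Leading.

Lemma leading_widen J l l' n t : (l <= l')%N -> leading J l n t -> leading J l' n t.
Proof.
move=> hl [h [x [y [Jx [Ry e]]]]]; split=> //; exists x, y.
by split=> //; split=> //; apply: in_window_widen Ry.
Qed.

Lemma leading_mono (J J' : S -> Prop) l n t :
  (forall x, J x -> J' x) -> leading J l n t -> leading J' l n t.
Proof. by move=> hJ [h [x [y [/hJ Jx [Ry e]]]]]; split=> //; exists x, y. Qed.

Lemma leading_sub J J' : right_ideal_of Uall J -> right_ideal_of Uall J' ->
  (forall l t, leading J l 0 t -> leading J' l 0 t) ->
  forall l n t, leading J l n t -> leading J' l n t.
Proof.
move=> hJ hJ' h0 l n t /(leading_span hJ).
apply: (zspan_min (leading_addsubgroup hJ' l n)) => _ [t0 [u [ht0 [hu ->]]]].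
by have := leading_mulr hJ' (h0 _ _ ht0) hu; rewrite add0r.
Qed.

(* Subtracting from [x] an element of [J'] with the same leading term shrinks
   its window, so [J] and [J'] agree once their leading terms do. *)
Lemma ideal_sub_of_leading J J' : right_ideal_of Uall J -> right_ideal_of Uall J' ->
  (forall x, J' x -> J x) -> (forall l n t, leading J l n t -> leading J' l n t) ->
  forall n l x, J x -> in_window n l x -> J' x.
Proof.
move=> hJ hJ' J'J hlead n l; elim: l n => [|l IH] n x hx /=.
  by move=> ->; apply: hJ'.2.1.
move=> [t [y [ht [hy xE]]]].
have [_ [x' [y' [Jx' [hy' x'E]]]]] : leading J' l n t by apply: hlead; split=> //; exists x, y.
have hd : J (y - y').
  have -> : y - y' = x - x' by rewrite xE x'E opprD addrACA subrr add0r.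
  exact: hJ.2.2.1 hx (J'J _ Jx').
have := IH _ _ hd ((in_window_addsubgroup _ _).2 _ _ hy hy').
have -> : x = x' + (y - y') by rewrite xE x'E -addrA subrKC.
exact: addsubgroupD (right_submodule_addsubgroup hJ') Jx'.
Qed.

Theorem zgraded_right_noetherian : right_noetherian_on Uall.
Proof.
move=> J hJ hasc.
have [N hN] := right_noetherian_grid (A := fun l k => leading (J k) l 0) RNT
  (fun l k => leading0_ideal (hJ k) l)
  (fun l l' k k' t hl hk h =>
     leading_mono (fun x => ascending_le hasc hk) (leading_widen hl h)).
exists N => k hk x; split=> [hx|]; last exact: ascending_le.
have [n [l hw]] := in_window_cover ((hJ k).1 x hx).
apply: ideal_sub_of_leading (hJ k) (hJ N) _ _ n l x hx hw => [y|].
  exact: ascending_le.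
by apply: leading_sub (hJ k) (hJ N) _ => l' t; apply: hN.
Qed.

End ZGraded.

(* [e] plays the role of epsilon_{g^-1}, the unit of the ideal S_{g^-1} S_g of S_e. *)
Definition eps_unit (G : group) (S : nzRingType) (Sg : G -> S -> Prop) (g : G) (e : S) :=
  zspan (fun y => exists b c, Sg (ginv g) b /\ Sg g c /\ y = b * c) e /\
  (forall r, Sg (gone G) r -> e * r = r * e) /\ e * e = e /\
  (forall s, Sg g s -> s * e = s).

Record right_unital_grading (G : group) (S : nzRingType) (Sg : G -> S -> Prop) : Prop := {
  homog_addsubgroup : forall g, is_addsubgroup (Sg g);
  homog_cover : forall s, zspan (fun x => exists g, Sg g x) s;
  homogM : forall g h x y, Sg g x -> Sg h y -> Sg (gmul g h) (x * y);
  homog_unit : forall g, exists e, eps_unit Sg g e }.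

Arguments homogM [G S Sg] _ [g h x y].

Section RightUnitalGrading.
Variables (G : group) (S : nzRingType) (Sg : G -> S -> Prop).
Hypotheses (gS : right_unital_grading Sg) (RNe : right_noetherian_on (Sg (gone G))).
Local Notation E := (Sg (gone G)).

Lemma homog1_subring : is_subring E.
Proof.
split; first exact: (homog_addsubgroup gS (gone G)).
by move=> x y hx hy; have := homogM gS hx hy; rewrite gmul1.
Qed.

Lemma homog_triple g s : Sg g s ->
  zspan (fun y => exists a b c, Sg g a /\ Sg (ginv g) b /\ Sg g c /\ y = a * b * c) s.
Proof.
move=> hs; have [e [he [_ [_ unit]]]] := homog_unit gS g.
rewrite -(unit s hs); apply: (zspan_min (addsubgroup_mull s (zspan_addsubgroup _))) he.
by move=> _ [b [c [hb [hc ->]]]]; apply: zspan_gen; exists s, b, c; rewrite mulrA.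
Qed.

Definition hspan (C : G -> Prop) := zspan (fun x => exists2 g, C g & Sg g x).

Lemma hspan_subring C : is_subgroup C -> is_subring (hspan C).
Proof.
move=> sC; split; first exact: zspan_addsubgroup.
move=> x y hx hy.
apply: (zspan_mul2 (zspan_addsubgroup _) _ hx hy) => a b [g Cg ha] [h Ch hb].
apply: zspan_gen; exists (gmul g h); first exact: (subgroupM sC Cg Ch).
exact: (homogM gS ha hb).
Qed.

Lemma hspan_mono C C' x : (forall g, C g -> C' g) -> hspan C x -> hspan C' x.
Proof. by move=> hC; apply: zspan_mono => y [g /hC]; exists g. Qed.

Lemma hspan_trivial C x : (forall g, C g <-> g = gone G) -> hspan C x <-> E x.
Proof.
move=> hC; split; last by move=> hx; apply: zspan_gen; exists (gone G) => //; apply/hC.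
by apply: (zspan_min (homog_addsubgroup gS _)) => y [g /hC ->].
Qed.

(* The [eps_unit]s of degrees in [C] are commuting idempotents of [E]; by noetherianity
   finitely many of them generate all the others, and their join is the required unit. *)
Lemma local_right_unit (C : G -> Prop) : exists f,
  zspan (fun y => exists g b c, C g /\ Sg (ginv g) b /\ Sg g c /\ y = b * c) f /\
  forall g s, C g -> Sg g s -> s * f = s.
Proof.
pose W := zspan (fun y => exists g b c, C g /\ Sg (ginv g) b /\ Sg g c /\ y = b * c).
pose X e := exists2 g, C g & eps_unit Sg g e.
have WE y : W y -> E y.
  apply: (zspan_min (homog_addsubgroup gS _)) => _ [g [b [c [_ [hb [hc ->]]]]]].
  by have := homogM gS hb hc; rewrite gmulV.
have XW e : X e -> W e.
  move=> [g Cg [he _]]; apply: zspan_mono he => _ [b [c [hb [hc ->]]]].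
  by exists g, b, c.
have W_subring : is_subring W.
  split; first exact: zspan_addsubgroup.
  move=> x y Wx /WE Ey; apply: (zspan_min (addsubgroup_mulr y (zspan_addsubgroup _))) Wx.
  move=> _ [g [b [c [Cg [hb [hc ->]]]]]]; apply: zspan_gen; exists g, b, (c * y).
  by rewrite mulrA; do 3!split=> //; have := homogM gS hc Ey; rewrite gmul1_r.
have [es [esX es_gen]] := right_noetherian_fg (phi := id) homog1_subring RNe
  (fun z hz => WE z (XW z hz)).
pose f := idem_join es.
have Wf : W f by apply: (idem_join_subring W_subring) => e /esX /XW.
have f_es e : e \in es -> f * e = e.
  apply: idem_join_absorb => [x /esX [g _ [_ [_ [idem _]]]] //|x x' /esX [g _ [_ [comm _]]]].
  by move=> /esX /XW /WE /comm.
exists f; split=> // g s Cg hs.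
have [e he] := homog_unit gS g.
have [_ [comm [_ unit]]] := he.
have f_e : f * e = e.
  by apply: right_ideal_gen_fixl (es_gen e (ex_intro2 _ _ g Cg he)) => _ [x /f_es hx ->].
by rewrite -(unit s hs) -mulrA comm ?f_e //; apply: WE.
Qed.

Lemma finite_index_right_span (K : G -> Prop) (m : nat) (t : 'I_m -> G) :
  is_subgroup K -> (forall y, exists j, K (gmul (ginv (t j)) y)) ->
  exists gens, forall s, right_span (hspan K) gens s.
Proof.
move=> sK cover.
pose X j (p : S * S) := exists g, K (gmul (ginv (t j)) g) /\ Sg g p.1 /\ Sg (ginv g) p.2.
pose phi (p : S * S) := p.1 * p.2.
have hfg j : exists xs : seq (S * S), (forall p, p \in xs -> X j p) /\
    forall z, X j z -> right_ideal_gen E (fun y => exists2 p, p \in xs & y = phi p) (phi z).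
  apply: (right_noetherian_fg homog1_subring RNe) => -[a b] [g [_ [ha hb]]].
  by have := homogM gS ha hb; rewrite gmulV_r.
have [xs hxs] := fin_all_exists hfg.
pose gens := flatten [seq map fst (xs j) | j <- enum 'I_m].
exists gens => s.
apply: (zspan_min (zspan_addsubgroup _)) (homog_cover gS s) => y [g hg].
have [j hj] := cover g.
apply: (zspan_min (zspan_addsubgroup _)) (homog_triple hg).
move=> _ [a [b [c [ha [hb [hc ->]]]]]].
have gen_p p q : p \in xs j -> (forall h, Sg h p.2 -> Sg h q) ->
    right_span (hspan K) gens (p.1 * (q * c)).
  move=> hp hq; have [gp [Kgp [_ hp2]]] := (hxs j).1 p hp.
  apply: zspan_gen; exists p.1, (q * c); split.
    by apply/flatten_mapP; exists j; rewrite ?mem_enum ?map_f.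
  split=> //; apply: zspan_gen; exists (gmul (ginv gp) g).
    exact: (subgroup_coset_div sK Kgp hj).
  exact: (homogM gS (hq _ hp2) hc).
have := (hxs j).2 (a, b) (ex_intro _ g (conj hj (conj ha hb))).
apply: (zspan_min (addsubgroup_mulr c (zspan_addsubgroup _))).
move=> _ [[p hp ->]|[_ [r [[p hp ->] [hr ->]]]]].
  by rewrite /phi -mulrA; apply: (gen_p _ _ hp).
rewrite /phi -(mulrA p.1) -mulrA; apply: (gen_p _ _ hp) => h hh.
by have := homogM gS hh hr; rewrite gmul1_r.
Qed.

Lemma finite_index_right_noetherian (K : G -> Prop) (m : nat) (t : 'I_m -> G) :
  is_subgroup K -> (forall y, exists j, K (gmul (ginv (t j)) y)) ->
  right_noetherian_on (hspan K) -> right_noetherian_on (fun _ : S => True).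
Proof.
move=> sK cover RNK J hJ hasc; have [gens hgens] := finite_index_right_span sK cover.
have hJsub k : right_submodule (hspan K) (right_span (hspan K) gens) (J k).
  have [_ [J0 [JB JM]]] := hJ k.
  by split=> [x _|]; [apply: hgens | do 2?split=> //; move=> x r hx _; apply: JM].
have [N hN] := right_noetherian_right_span (hspan_subring sK) RNK hJsub hasc.
by exists N.
Qed.

Lemma cyclic_ext_right_noetherian (K H : G -> Prop) (a : G) :
  is_subgroup K -> is_subgroup H -> (forall x, K x -> H x) ->
  (forall x y, K x -> H y -> K (gmul (gmul y x) (ginv y))) -> H a ->
  (forall y, H y -> exists k : int, K (gmul (ginv (gzpow a k)) y)) ->
  right_noetherian_on (hspan K) -> right_noetherian_on (hspan H).
Proof.
move=> sK sH KH nK Ha cyc RNK.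
apply: (zgraded_right_noetherian (U := fun m => hspan (zcoset K a m))) RNK.
- by move=> m; apply: zspan_addsubgroup.
- move=> m k x y hx hy.
  apply: (zspan_mul2 (zspan_addsubgroup _) _ hx hy) => p q [g hg hp] [h hh hq].
  apply: zspan_gen; exists (gmul g h); first exact: (zcosetM sK sH nK Ha hg hh).
  exact: (homogM gS hp hq).
- move=> x; split; apply: hspan_mono => g; first by move/zcoset0.
  by move=> hg; apply/zcoset0.
- by move=> m x; apply: hspan_mono => g; apply: zcoset_sub.
- move=> x; apply: zspan_mono => y [g Hg hy]; have [k hk] := cyc g Hg.
  by exists k; apply: zspan_gen; exists g.
- move=> n; have [f [hf hsf]] := local_right_unit (zcoset K a n); exists f; split.
    apply: zspan_mono hf => _ [g [b [c [hg [hb [hc ->]]]]]]; exists b, c.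
    split; first by apply: zspan_gen; exists (ginv g) => //; exact: (zcosetV sK sH nK Ha hg).
    by split=> //; apply: zspan_gen; exists g.
  by move=> s; apply: (zspan_min (addsubgroup_fixr f)) => y [g hg]; apply: hsf.
Qed.

Theorem polycyclic_right_noetherian :
  polycyclic_by_finite G -> right_noetherian_on (fun _ : S => True).
Proof.
move=> [n [H [sH [H0 [_ [Hnorm [Hcyc [m [t cover]]]]]]]]].
suff RNH i : (i <= n)%N -> right_noetherian_on (hspan (H i)).
  exact: finite_index_right_noetherian (sH n) cover (RNH n (leqnn n)).
elim: i => [_|i IH hi].
  by apply: right_noetherian_on_ext RNe => x; rewrite hspan_trivial.
have [a [Ha cyc]] := Hcyc i hi.
have [sub norm] := Hnorm i (ltnW hi).
exact: cyclic_ext_right_noetherian (sH i) (sH i.+1) sub norm Ha cyc (IH (ltnW hi)).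
Qed.

End RightUnitalGrading.

Section EpsilonStrong.
Variables (G : group) (S : nzRingType) (Sg : G -> S -> Prop).
Hypothesis eps : epsilon_strongly_graded Sg.
Local Notation E := (Sg (gone G)).

Lemma prod2_zspan (A B : S -> Prop) s :
  prod2 A B s -> zspan (fun y => exists a b, A a /\ B b /\ y = a * b) s.
Proof.
move=> [n [a [b [hab ->]]]]; apply: addsubgroup_sum (zspan_addsubgroup _) _ => i.
by have [ha hb] := hab i; apply: zspan_gen; exists (a i), (b i).
Qed.

Lemma prod2_mul1 (A B : S -> Prop) a b : A a -> B b -> prod2 A B (a * b).
Proof. by move=> ha hb; exists 1%N, (fun _ => a), (fun _ => b); rewrite big_ord1. Qed.

Lemma prod2_mulr (A B : S -> Prop) y r : (forall b, B b -> B (b * r)) ->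
  prod2 A B y -> prod2 A B (y * r).
Proof.
move=> hB [n [a [b [hab ->]]]]; exists n, a, (fun i => b i * r); split.
  by move=> i; have [ha hb] := hab i; split=> //; apply: hB.
by rewrite mulr_suml; apply: eq_bigr => i _; rewrite mulrA.
Qed.

Lemma prod2_mull (A B : S -> Prop) y r : (forall a, A a -> A (r * a)) ->
  prod2 A B y -> prod2 A B (r * y).
Proof.
move=> hA [n [a [b [hab ->]]]]; exists n, (fun i => r * a i), b; split.
  by move=> i; have [ha hb] := hab i; split=> //; apply: hA.
by rewrite mulr_sumr; apply: eq_bigr => i _; rewrite mulrA.
Qed.

Lemma eps_addsubgroup g : is_addsubgroup (Sg g).
Proof. by case: eps => [[h _] _]. Qed.

Lemma epsM g h x y : Sg g x -> Sg h y -> Sg (gmul g h) (x * y).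
Proof. by case: eps => [[_ [_ [_ hM]]] _]; apply: hM. Qed.

Lemma eps_cover s : zspan (fun x => exists g, Sg g x) s.
Proof.
case: eps => [[_ [hcov _]] _]; have [n [g [x [hx ->]]]] := hcov s.
by apply: addsubgroup_sum (zspan_addsubgroup _) _ => i; apply: zspan_gen; exists (g i).
Qed.

Lemma eps_triple g s : Sg g s ->
  zspan (fun y => exists a b c, Sg g a /\ Sg (ginv g) b /\ Sg g c /\ y = a * b * c) s.
Proof.
case: eps => [_ [h3 _]] /h3 [n [a [b [c [habc ->]]]]].
apply: addsubgroup_sum (zspan_addsubgroup _) _ => i; apply: zspan_gen.
by have [ha [hb hc]] := habc i; exists (a i), (b i), (c i).
Qed.

Lemma eps_unit_strong h : exists e,
  zspan (fun y => exists b c, Sg h b /\ Sg (ginv h) c /\ y = b * c) e /\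
  (forall r, E r -> e * r = r * e) /\ e * e = e /\
  (forall s, Sg h s -> e * s = s) /\ (forall s, Sg (ginv h) s -> s * e = s).
Proof.
case: eps => [_ [_ hunit]]; have [e [he eunit]] := hunit h.
exists e; split; first exact: prod2_zspan.
split.
  move=> r hr.
  have -> : e * r = e * r * e.
    apply/esym/(eunit _ _).2; apply: prod2_mulr he => c hc.
    by have := epsM hc hr; rewrite gmul1_r.
  rewrite -mulrA; apply: (eunit _ _).1; apply: prod2_mull he => b hb.
  by have := epsM hr hb; rewrite gmul1.
split; first exact: (eunit _ he).1.
split.
  move=> s /eps_triple; apply: (zspan_min (addsubgroup_fixl e)).
  move=> _ [a [b [c [ha [hb [hc ->]]]]]].
  by rewrite !mulrA -(mulrA e a b) (eunit _ (prod2_mul1 ha hb)).1.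
move=> s /eps_triple; apply: (zspan_min (addsubgroup_fixr e)).
move=> _ [a [b [c [ha [hb [hc ->]]]]]]; rewrite ginvK in hb.
by rewrite -!mulrA (mulrA b c e) (eunit _ (prod2_mul1 hb hc)).2.
Qed.

Lemma eps_right_unital : right_unital_grading Sg.
Proof.
split; [exact: eps_addsubgroup | exact: eps_cover | exact: epsM |].
move=> g; have [e [he [comm [idem [_ unit]]]]] := eps_unit_strong (ginv g).
by exists e; rewrite ginvK in he unit.
Qed.

Lemma eps_converse_right_unital : right_unital_grading (S := S^c) (fun g => Sg (ginv g)).
Proof.
split=> [g|s|g h x y hx hy|g].
- exact: eps_addsubgroup.
- apply: zspan_converse; apply: zspan_mono (eps_cover s) => y [g hg].
  by exists (ginv g); rewrite ginvK.
- by rewrite ginvM; apply: epsM hy hx.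
- have [e [he [comm [idem [unit _]]]]] := eps_unit_strong (ginv g).
  exists e; split.
    apply: zspan_converse; apply: zspan_mono he => _ [b [c [hb [hc ->]]]].
    by exists c, b.
  split; last by split.
  by move=> r; rewrite ginv1 => /comm.
Qed.

End EpsilonStrong.

Theorem theorem3p7 (G : group) (S : nzRingType) (Sg : G -> S -> Prop) :
  polycyclic_by_finite G ->
  epsilon_strongly_graded Sg ->
  (right_noetherian_on (Sg (gone G)) -> right_noetherian_on (fun _ : S => True)) /\
  (left_noetherian_on (Sg (gone G)) -> left_noetherian_on (fun _ : S => True)).
Proof.
move=> hG heps; split=> RN.
  exact: polycyclic_right_noetherian (eps_right_unital heps) RN hG.
have RNc : right_noetherian_on (S := S^c) (Sg (ginv (gone G))) by rewrite ginv1.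
exact: polycyclic_right_noetherian (eps_converse_right_unital heps) RNc hG.
Qed.
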